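(* Let $\mathcal{C}$ be a category, $J$ a directed partially ordered set, and let $(f,f^j_\mu),(f',f'^j_\mu):\boldsymbol{X}\to\boldsymbol{Y}$ and $(g,g^j_\nu),(g',g'^j_\nu):\boldsymbol{Y}\to\boldsymbol{Z}$ be $J$-morphisms of inverse systems in $\mathcal{C}$. If $(f,f^j_\mu)\sim(f',f'^j_\mu)$ and $(g,g^j_\nu)\sim(g',g'^j_\nu)$, then $(g,g^j_\nu)(f,f^j_\mu)\sim(g',g'^j_\nu)(f',f'^j_\mu)$.
   Context: An inverse system $\boldsymbol{X}=(X_\lambda,p_{\lambda\lambda'},\Lambda)$ in $\mathcal{C}$: $\Lambda$ directed preordered, morphisms $p_{\lambda\lambda'}:X_{\lambda'}\to X_\lambda$ for $\lambda\le\lambda'$, $p_{\lambda\lambda}=1$, $p_{\lambda\lambda'}p_{\lambda'\lambda''}=p_{\lambda\lambda''}$; similarly $\boldsymbol{Y}=(Y_\mu,q_{\mu\mu'},M)$, $\boldsymbol{Z}=(Z_\nu,r_{\nu\nu'},N)$. A $J$-morphism $(f,f^j_\mu):\boldsymbol{X}\to\boldsymbol{Y}$ consists of $f:M\to\Lambda$ and $\mathcal{C}$-morphisms $f^j_\mu:X_{f(\mu)}\to Y_\mu$ ($\mu\in M$, $j\in J$) such that for all $\mu\le\mu'$ there exist $\lambda\ge f(\mu),f(\mu')$ and $j_0$ with $f^{j'}_\mu p_{f(\mu)\lambda}=q_{\mu\mu'}f^{j'}_{\mu'}p_{f(\mu')\lambda}$ for all $j'\ge j_0$. Composition: $(g,g^j_\nu)(f,f^j_\mu)=(fg,g^j_\nu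 f^j_{g(\nu)})$. $(f,f^j_\mu)\sim(f',f'^j_\mu)$ iff for every $\mu$ there exist $\lambda\ge f(\mu),f'(\mu)$ and $j_0$ with $f^{j'}_\mu p_{f(\mu)\lambda}=f'^{j'}_\mu p_{f'(\mu)\lambda}$ for all $j'\ge j_0$ (analogously for morphisms $\boldsymbol{Y}\to\boldsymbol{Z}$ and $\boldsymbol{X}\to\boldsymbol{Z}$). *)

Set Implicit Arguments.
Unset Strict Implicit.

Record Category := {
  Ob :> Type;
  Hom : Ob -> Ob -> Type;
  comp : forall a b c : Ob, Hom b c -> Hom a b -> Hom a c;
  idm : forall a : Ob, Hom a a;
  comp_assoc : forall a b c d (h : Hom c d) (g : Hom b c) (f : Hom a b),
      comp h (comp g f) = comp (comp h g) f;
  comp_idl : forall a b (f : Hom a b), comp (idm b) f = f;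
  comp_idr : forall a b (f : Hom a b), comp f (idm a) = f
}.
Arguments comp {_ _ _ _} _ _.
Arguments idm {_} _.

Record DirPreorder := {
  dcar :> Type;
  dle : dcar -> dcar -> Prop;
  dle_refl : forall x, dle x x;
  dle_trans : forall x y z, dle x y -> dle y z -> dle x z;
  dle_directed : forall x y, exists z, dle x z /\ dle y z
}.
Arguments dle {_} _ _.

Definition antisymmetric (D : DirPreorder) : Prop :=
  forall x y : D, dle x y -> dle y x -> x = y.

Record InvSys (C : Category) := {
  idx : DirPreorder;
  sobj : idx -> Ob C;
  bond : forall l l' : idx, dle l l' -> @Hom C (sobj l') (sobj l);
  bond_id : forall l (h : dle l l), bond h = idm (sobj l);
  bond_comp : forall l l' l'' (h1 : dle l l') (h2 : dle l' l'') (h3 : dle l l''),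
      comp (bond h1) (bond h2) = bond h3
}.
Arguments idx {C} _.
Arguments sobj {C} _ _.
Arguments bond {C} _ {l l'} _.

Record JData (C : Category) (J : DirPreorder) (X Y : InvSys C) := {
  jf : idx Y -> idx X;
  jm : forall (j : J) (mu : idx Y), @Hom C (sobj X (jf mu)) (sobj Y mu)
}.
Arguments jf {C J X Y} _ _.
Arguments jm {C J X Y} _ _ _.

Definition is_Jmor (C : Category) (J : DirPreorder) (X Y : InvSys C)
    (F : JData J X Y) : Prop :=
  forall (mu mu' : idx Y) (h : dle mu mu'),
    exists (lam : idx X) (h1 : dle (jf F mu) lam) (h2 : dle (jf F mu') lam) (j0 : J),
      forall j' : J, dle j0 j' ->
        comp (jm F j' mu) (bond X h1) =
        comp (bond Y h) (comp (jm F j' mu') (bond X h2)).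

Definition Jcomp (C : Category) (J : DirPreorder) (X Y Z : InvSys C)
    (G : JData J Y Z) (F : JData J X Y) : JData J X Z :=
  {| jf := fun nu => jf F (jf G nu);
     jm := fun j nu => comp (jm G j nu) (jm F j (jf G nu)) |}.

Definition Jequiv (C : Category) (J : DirPreorder) (X Y : InvSys C)
    (F F' : JData J X Y) : Prop :=
  forall mu : idx Y,
    exists (lam : idx X) (h1 : dle (jf F mu) lam) (h2 : dle (jf F' mu) lam) (j0 : J),
      forall j' : J, dle j0 j' ->
        comp (jm F j' mu) (bond X h1) = comp (jm F' j' mu) (bond X h2).

(* Both composites are compared through an index mu of Y at which g_nu and
   g'_nu agree after bonding: naturality of f moves f_{g(nu)} up to f_mu,
   f ~ f' replaces f_mu by f'_mu, and naturality of f' moves back down to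
   f'_{g'(nu)}.  Each step holds after a bond of X and for all large j;
   directedness of Lambda and of J lets the steps be chained. *)

Set Implicit Arguments.
Unset Strict Implicit.

Section Eventually.
Variable J : DirPreorder.

Definition eventually (P : J -> Prop) : Prop :=
  exists j0 : J, forall j : J, dle j0 j -> P j.

Lemma eventually_mono (P Q : J -> Prop) :
  eventually P -> (forall j, P j -> Q j) -> eventually Q.
Proof.
  intros [j0 HP] PQ. exists j0. intros j hj. exact (PQ j (HP j hj)).
Qed.

Lemma eventually_and (P Q : J -> Prop) :
  eventually P -> eventually Q -> eventually (fun j => P j /\ Q j).
Proof.
  intros [j1 HP] [j2 HQ].
  destruct (dle_directed j1 j2) as [j0 [h1 h2]].
  exists j0. intros j hj.
  split; [apply HP | apply HQ]; eapply dle_trans; eassumption.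
Qed.

End Eventually.

Section BondEquiv.
Variables (C : Category) (J : DirPreorder) (X : InvSys C).

Lemma comp_bond_raise (A : Ob C) (l1 l2 lam lam' : idx X)
    (u : Hom (sobj X l1) A) (v : Hom (sobj X l2) A)
    (h1 : dle l1 lam) (h2 : dle l2 lam) (k1 : dle l1 lam') (k2 : dle l2 lam') :
  dle lam lam' ->
  comp u (bond X h1) = comp v (bond X h2) ->
  comp u (bond X k1) = comp v (bond X k2).
Proof.
  intros e E.
  rewrite <- (bond_comp h1 e k1), <- (bond_comp h2 e k2), !comp_assoc, E.
  reflexivity.
Qed.

(* [Jequiv F F'] is, by definition, [bond_equiv] of the [mu]-components for
   every [mu]. *)
Definition bond_equiv (A : Ob C) (l1 l2 : idx X)
    (u : J -> Hom (sobj X l1) A) (v : J -> Hom (sobj X l2) A) : Prop :=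
  exists (lam : idx X) (h1 : dle l1 lam) (h2 : dle l2 lam),
    eventually (fun j => comp (u j) (bond X h1) = comp (v j) (bond X h2)).

Lemma bond_equiv_sym (A : Ob C) (l1 l2 : idx X)
    (u : J -> Hom (sobj X l1) A) (v : J -> Hom (sobj X l2) A) :
  bond_equiv u v -> bond_equiv v u.
Proof.
  intros [lam [h1 [h2 E]]]. exists lam, h2, h1.
  apply (eventually_mono E). intros j Ej. symmetry. exact Ej.
Qed.

Lemma bond_equiv_trans (A : Ob C) (l1 l2 l3 : idx X)
    (u : J -> Hom (sobj X l1) A) (v : J -> Hom (sobj X l2) A)
    (w : J -> Hom (sobj X l3) A) :
  bond_equiv u v -> bond_equiv v w -> bond_equiv u w.
Proof.
  intros [m [h1 [h2 Euv]]] [m' [k2 [k3 Evw]]].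
  destruct (dle_directed m m') as [n [e e']].
  exists n, (dle_trans h1 e), (dle_trans k3 e').
  apply (eventually_mono (eventually_and Euv Evw)). intros j [E E'].
  transitivity (comp (v j) (bond X (dle_trans h2 e))).
  - exact (comp_bond_raise _ _ e E).
  - exact (comp_bond_raise _ _ e' E').
Qed.

Lemma eventually_bond_equiv (A : Ob C) (l : idx X) (u v : J -> Hom (sobj X l) A) :
  eventually (fun j => u j = v j) -> bond_equiv u v.
Proof.
  intros E. exists l, (dle_refl l), (dle_refl l).
  apply (eventually_mono E). intros j Ej. rewrite Ej. reflexivity.
Qed.

Lemma bond_equiv_comp_l (A B : Ob C) (l1 l2 : idx X) (w : J -> Hom A B)
    (u : J -> Hom (sobj X l1) A) (v : J -> Hom (sobj X l2) A) :
  bond_equiv u v ->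
  bond_equiv (fun j => comp (w j) (u j)) (fun j => comp (w j) (v j)).
Proof.
  intros [lam [h1 [h2 E]]]. exists lam, h1, h2.
  apply (eventually_mono E). intros j Ej. rewrite <- !comp_assoc, Ej. reflexivity.
Qed.

End BondEquiv.

Lemma Jmor_bond_equiv_comp (C : Category) (J : DirPreorder) (X Y : InvSys C)
    (F : JData J X Y) (mu mu' : idx Y) (h : dle mu mu') (A : Ob C)
    (w : J -> Hom (sobj Y mu) A) :
  is_Jmor F ->
  bond_equiv (fun j => comp (w j) (jm F j mu))
             (fun j => comp (comp (w j) (bond Y h)) (jm F j mu')).
Proof.
  intros HF. destruct (HF mu mu' h) as [lam [h1 [h2 E]]].
  exists lam, h1, h2.
  apply (eventually_mono E). intros j Ej. rewrite <- !comp_assoc, Ej. reflexivity.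
Qed.

Theorem lemma4 (C : Category) (J : DirPreorder) (J_antisym : antisymmetric J)
    (X Y Z : InvSys C) (F F' : JData J X Y) (G G' : JData J Y Z)
    (HF : is_Jmor F) (HF' : is_Jmor F') (HG : is_Jmor G) (HG' : is_Jmor G')
    (HFF' : Jequiv F F') (HGG' : Jequiv G G') :
  Jequiv (Jcomp G F) (Jcomp G' F').
Proof.
  intros nu.
  change (bond_equiv (fun j => jm (Jcomp G F) j nu) (fun j => jm (Jcomp G' F') j nu)).
  destruct (HGG' nu) as [mu [a [a' Hg]]].
  apply bond_equiv_trans
    with (v := fun j => comp (comp (jm G j nu) (bond Y a)) (jm F j mu)).
  { exact (Jmor_bond_equiv_comp a _ HF). }
  apply bond_equiv_trans
    with (v := fun j => comp (comp (jm G' j nu) (bond Y a')) (jm F j mu)).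
  { apply eventually_bond_equiv.
    apply (eventually_mono Hg). intros j Ej. rewrite Ej. reflexivity. }
  apply bond_equiv_trans
    with (v := fun j => comp (comp (jm G' j nu) (bond Y a')) (jm F' j mu)).
  { apply bond_equiv_comp_l. exact (HFF' mu). }
  apply bond_equiv_sym. exact (Jmor_bond_equiv_comp a' _ HF').
Qed.
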